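(* For all $N\in\mathbb{N}$, $|\mathcal{D}_6(N)|=\frac18\,\#\{(x,y)\in\mathbb{Z}^2\mid x^2+y^2=12N+5\}$.
   Context: A bar partition is an integer partition $\lambda=(\lambda_1>\lambda_2>\dots>\lambda_r>0)$ with distinct parts; its size is $\sum\lambda_k$. Its double distinct partition $\widetilde\lambda$ is the partition with Frobenius coordinates $(\lambda_1,\dots,\lambda_r\mid\lambda_1-1,\dots,\lambda_r-1)$ (obtained by shifting row $k$ of the Young diagram of $\lambda$ by $k$ steps to the right and completing by the transpose of this shifted diagram). A partition is a $6$-core if none of its hook lengths equals $6$. $\mathcal{D}_6(N)$ is the set of bar partitions $\lambda$ of size $N$ with no part equal to $3$ such that $\widetilde\lambda$ is a $6$-core. *)

From mathcomp Require Import all_boot all_order all_algebra.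
Set Implicit Arguments. Unset Strict Implicit. Unset Printing Implicit Defensive.

(* Partitions are represented as weakly decreasing seq nat of positive parts;
   rows/columns are 0-indexed internally. *)

Definition is_bar_partition (l : seq nat) : bool :=
  sorted gtn l && all (fun x => 0 < x) l.

Definition conj_part (mu : seq nat) (j : nat) : nat := count (fun x => j < x) mu.

Definition hook (mu : seq nat) (i j : nat) : nat :=
  (nth 0 mu i - j.+1) + (conj_part mu j - i.+1) + 1.

Definition is_core (t : nat) (mu : seq nat) : bool :=
  all (fun i => all (fun j => hook mu i j != t) (iota 0 (nth 0 mu i)))
      (iota 0 (size mu)).

(* Double distinct partition: the partition with Frobenius coordinates
   (l_1,...,l_r | l_1 - 1, ..., l_r - 1).  With 0-indexed rows, row i has
   [i < r] * (alpha_i + 1) cells on/right of the diagonal, plus one cell in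
   column j < min(i,r) whenever i - j <= beta_j. *)
Definition double_distinct (l : seq nat) : seq nat :=
  filter (fun x => 0 < x)
    [seq (i < size l) * (nth 0 l i).+1
         + count (fun j => i <= (nth 0 l j).-1 + j) (iota 0 (minn i (size l)))
    | i <- iota 0 (sumn l + size l)].

Definition inD6 (N : nat) (l : seq nat) : bool :=
  [&& is_bar_partition l, sumn l == N, 3 \notin l & is_core 6 (double_distinct l)].

(* A bar partition of N is the decreasing listing of a finite set of
   positive integers (each <= N); we count such sets. *)
Definition bar_of (N : nat) (A : {set 'I_N.+1}) : seq nat :=
  sort geq [seq val i | i <- enum A].

Definition D6 (N : nat) : {set {set 'I_N.+1}} :=
  [set A | inD6 N (bar_of A)].

(* number of (x,y) in Z^2 with x^2 + y^2 = n; any solution has |x|,|y| <= n *)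
Definition int_range (M : nat) : seq int :=
  [seq (i%:Z - M%:Z)%R | i <- iota 0 (2 * M).+1].

Definition r2 (n : nat) : nat :=
  count (fun p : int * int => (p.1 ^+ 2 + p.2 ^+ 2 == n%:Z)%R)
        [seq (x, y) | x <- int_range n, y <- int_range n].

(* The hooks of the doubled distinct partition of a bar partition l are the sums
   l_i + l_j of two parts together with the numbers l_i - y for y >= 0 not a part
   of l.  Hence it is a t-core iff l is a t-bar core: t is not a part, x - t is a
   part whenever x > t is, and x and t - x are never both parts.  For t = 6 this
   forces l to consist of chains r, r + 6, ..., r + 6 (a_r - 1) in the residues
   r = 1, 5, 2, 4 with a_1 a_5 = a_2 a_4 = 0, and completing squares gives
   12 |l| + 5 = x^2 + y^2 with x = 6 a_1 - 2 or -6 a_5 - 2 and y = 6 a_2 - 1 or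
   -6 a_4 - 1: a bijection onto the representations with x = 4, y = 5 (mod 6).
   In any representation of 12 N + 5 one coordinate is +-1 and the other +-2 mod 6,
   so swapping the coordinates and changing their signs shows that these are one
   eighth of all representations. *)

From mathcomp Require Import all_boot all_order all_algebra.
From mathcomp Require Import zify.
Set Implicit Arguments. Unset Strict Implicit. Unset Printing Implicit Defensive.
Import GRing.Theory Num.Theory.

Lemma count_iota_le (P : pred nat) r : count P (iota 0 r) <= r.
Proof. by rewrite (leq_trans (count_size _ _)) ?size_iota. Qed.

Lemma downclosed_count_iota (P : pred nat) r t :
  (forall s u, s <= u -> u < r -> P u -> P s) ->
  t < r -> P t = (t < count P (iota 0 r)).
Proof.
move=> down ltr; have letr := ltnW ltr.
rewrite -(subnKC letr) iotaD count_cat add0n.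
case Pt: (P t).
  have /eqP-> : count P (iota 0 t) == t.
    rewrite -{2}(size_iota 0 t) -all_count.
    by apply/allP=> s; rewrite mem_iota add0n => /andP[_ /ltnW lest]; apply: down Pt.
  rewrite -[X in X < _]addn0 ltn_add2l -has_count.
  by rewrite -(subnSK ltr) /= Pt.
have -> : count P (iota t (r - t)) = 0.
  apply/eqP; rewrite eqn0Ngt -has_count.
  apply/hasPn=> u; rewrite mem_iota subnKC // => /andP[letu ltur].
  by apply/negP=> /(down _ _ letu ltur); rewrite Pt.
by rewrite addn0 ltnNge count_iota_le.
Qed.

Lemma count_iota_ltn c m n : count (fun i => i < c) (iota m n) = minn (c - m) n.
Proof. by elim: n m => [|n IH] m /=; rewrite ?IH; lia. Qed.

Lemma leq_sumn_mem (s : seq nat) x : x \in s -> x <= sumn s.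
Proof. by elim: s => //= y s IH; rewrite inE => /orP[/eqP->|/IH]; lia. Qed.

(** * Hooks of doubled distinct partitions *)

(* The number of rows t of the shifted diagram of l, row t occupying the columns
   t + 1, ..., t + l_t, that reach column j. *)
Definition shifted_col (l : seq nat) j :=
  count (fun t => j <= nth 0 l t + t) (iota 0 (size l)).

Definition dd_row (l : seq nat) i := (i < size l) * (nth 0 l i).+1
  + count (fun j => i <= (nth 0 l j).-1 + j) (iota 0 (minn i (size l))).

Definition dd_height (l : seq nat) := maxn (size l) (nth 0 l 0).

Lemma shifted_col_le_size l j : shifted_col l j <= size l.
Proof. exact: count_iota_le. Qed.

Section BarPartition.

Variable l : seq nat.
Hypothesis bar_l : is_bar_partition l.

Lemma bar_nth_ltn s t : s < t < size l -> nth 0 l t < nth 0 l s.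
Proof.
case/andP: bar_l => sorted_l _ /andP[lt_st lt_tl].
apply: (sorted_ltn_nth (rev_trans ltn_trans)) => //.
exact: ltn_trans lt_tl.
Qed.

Lemma bar_nth_gap s t : s <= t -> t < size l -> nth 0 l t + (t - s) <= nth 0 l s.
Proof.
elim: t => [|t IH] le_st lt_tl; first by move: le_st; rewrite leqn0 => /eqP->; rewrite addn0.
have [lt_st|le_ts] := ltnP s t.+1; last by rewrite (@anti_leq s t.+1) ?le_st ?subnn ?addn0.
have := IH ltac:(lia) ltac:(lia); have := @bar_nth_ltn t t.+1 ltac:(lia); lia.
Qed.

Lemma bar_nth_gt0 t : t < size l -> 0 < nth 0 l t.
Proof. by case/andP: bar_l => _ /allP pos_l lt_tl; apply/pos_l/mem_nth. Qed.

Lemma bar_nth_ge t : t < size l -> size l - t <= nth 0 l t.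
Proof.
move=> lt_tl; have := @bar_nth_gap t (size l).-1 ltac:(lia) ltac:(lia).
have := @bar_nth_gt0 (size l).-1 ltac:(lia); lia.
Qed.

Lemma shifted_colP j t : t < size l ->
  (j <= nth 0 l t + t) = (t < shifted_col l j).
Proof.
apply: downclosed_count_iota => s u le_su lt_ul /=.
have := bar_nth_gap le_su lt_ul; lia.
Qed.

Lemma shifted_col_notin j : shifted_col l j <= j -> j - shifted_col l j \notin l.
Proof.
move=> le_kj; apply/negP => /(nthP 0) [t lt_tl def_t].
have := shifted_colP j lt_tl; rewrite def_t; lia.
Qed.

Lemma dd_row_small i : i < size l -> dd_row l i = nth 0 l i + i + 1.
Proof.
move=> lt_il; rewrite /dd_row lt_il mul1n (minn_idPl (ltnW lt_il)).
rewrite (eq_in_count (a2 := predT)) ?count_predT ?size_iota; first by lia.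
move=> j; rewrite mem_iota add0n => /andP[_ lt_ji] /=.
have := bar_nth_gap (ltnW lt_ji) lt_il; have := bar_nth_gt0 lt_il; lia.
Qed.

Lemma dd_row_large i : size l <= i -> dd_row l i = shifted_col l i.+1.
Proof.
move=> le_li; rewrite /dd_row ltnNge le_li mul0n add0n (minn_idPr le_li).
apply: eq_in_count => j; rewrite mem_iota add0n => /andP[_ lt_jl] /=.
have := bar_nth_gt0 lt_jl; lia.
Qed.

Lemma dd_row_gt0 i : (0 < dd_row l i) = (i < dd_height l).
Proof.
rewrite /dd_height; have [lt_il|le_li] := ltnP i (size l).
  by rewrite dd_row_small //; lia.
rewrite dd_row_large //; case: (posnP (size l)) => [/size0nil-> //|l_gt0].
have := shifted_colP i.+1 l_gt0; rewrite addn0; lia.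
Qed.

Lemma dd_height_le : dd_height l <= sumn l + size l.
Proof.
rewrite /dd_height geq_max leq_addl /=; case: (posnP (size l)) => [/size0nil-> //|l_gt0].
exact: leq_trans (leq_sumn_mem (mem_nth 0 l_gt0)) (leq_addr _ _).
Qed.

Lemma double_distinctE : double_distinct l = map (dd_row l) (iota 0 (dd_height l)).
Proof.
rewrite /double_distinct -/(map (dd_row l) _) filter_map; congr map.
rewrite (eq_filter (a2 := fun i => i < 0 + dd_height l)) => [|i]; last by rewrite /= dd_row_gt0.
exact/filter_iota_ltn/dd_height_le.
Qed.

Lemma size_double_distinct : size (double_distinct l) = dd_height l.
Proof. by rewrite double_distinctE size_map size_iota. Qed.

Lemma nth_double_distinct i : i < dd_height l ->
  nth 0 (double_distinct l) i = dd_row l i.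
Proof. by move=> lt_ih; rewrite double_distinctE (nth_map 0) ?size_iota ?nth_iota. Qed.

Lemma conj_double_distinct_small j : j < size l ->
  conj_part (double_distinct l) j = nth 0 l j + j.
Proof.
move=> lt_jl; rewrite double_distinctE /conj_part count_map.
have le_lh : size l <= dd_height l by apply: leq_maxl.
rewrite -(subnKC le_lh) iotaD count_cat.
rewrite (eq_in_count (a1 := preim _ _) (a2 := predT)) => [|i]; last first.
  rewrite mem_iota add0n => /andP[_ lt_il] /=.
  by rewrite dd_row_small //; have := bar_nth_ge lt_il; lia.
rewrite count_predT size_iota add0n.
rewrite (eq_in_count (a2 := fun i => i < nth 0 l j + j)) => [|i]; last first.
  by rewrite mem_iota => /andP[le_li _] /=; rewrite dd_row_large // -shifted_colP.
rewrite count_iota_ltn.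
have := bar_nth_ge lt_jl; have := @bar_nth_gap 0 j (leq0n j) lt_jl.
rewrite /dd_height; lia.
Qed.

Lemma conj_double_distinct_large j : size l <= j ->
  conj_part (double_distinct l) j = shifted_col l j.
Proof.
move=> le_lj; rewrite double_distinctE /conj_part count_map.
have le_lh : size l <= dd_height l by apply: leq_maxl.
rewrite -(subnKC le_lh) iotaD count_cat.
rewrite [X in _ + X](eq_in_count (a2 := pred0)) => [|i]; last first.
  rewrite mem_iota => /andP[le_li _] /=.
  by rewrite dd_row_large //; have := shifted_col_le_size l i.+1; lia.
rewrite count_pred0 addn0; apply: eq_in_count => i.
by rewrite mem_iota add0n => /andP[_ lt_il] /=; rewrite dd_row_small //; lia.
Qed.

Lemma hook_double_distinct_small i j : i < size l -> j < size l ->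
  hook (double_distinct l) i j = nth 0 l i + nth 0 l j.
Proof.
move=> lt_il lt_jl; have lt_ih : i < dd_height l by rewrite /dd_height; lia.
rewrite /hook nth_double_distinct // dd_row_small // conj_double_distinct_small //.
have := bar_nth_ge lt_il; have := bar_nth_ge lt_jl; lia.
Qed.

Lemma hook_double_distinct_arm i j : i < size l -> size l <= j ->
  j <= nth 0 l i + i ->
  hook (double_distinct l) i j + j = nth 0 l i + shifted_col l j.
Proof.
move=> lt_il le_lj le_ji; have lt_ih : i < dd_height l by rewrite /dd_height; lia.
rewrite /hook nth_double_distinct // dd_row_small // conj_double_distinct_large //.
have := shifted_colP j lt_il; rewrite le_ji; lia.
Qed.

Lemma hook_double_distinct_leg i j : size l <= i -> i < dd_height l ->
  j < shifted_col l i.+1 ->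
  hook (double_distinct l) i j + i.+1 = nth 0 l j + shifted_col l i.+1.
Proof.
move=> le_li lt_ih lt_jk; have lt_jl := leq_trans lt_jk (shifted_col_le_size l _).
rewrite /hook nth_double_distinct // dd_row_large // conj_double_distinct_small //.
have := shifted_colP i.+1 lt_jl; rewrite lt_jk; lia.
Qed.

End BarPartition.

(** * Bar cores *)

Definition bar_core (t : nat) (s : seq nat) := all (fun x =>
  [&& x != t, (t < x) ==> (x - t \in s) & (x < t) ==> (t - x \notin s)]) s.

Lemma bar_core_subn t s x : bar_core t s -> x \in s -> t <= x -> x - t \in s.
Proof.
move=> /allP core_s /core_s /and3P[neq_xt gt_xt _] le_tx.
by move: gt_xt; rewrite ltn_neqAle eq_sym neq_xt le_tx.
Qed.

Lemma is_coreP t mu : reflect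
  (forall i j, i < size mu -> j < nth 0 mu i -> hook mu i j != t) (is_core t mu).
Proof.
apply: (iffP allP) => [core_mu i j lt_i lt_j | core_mu i].
  have /allP := core_mu i ltac:(by rewrite mem_iota leq0n add0n).
  by apply; rewrite mem_iota leq0n add0n.
rewrite mem_iota => /andP[_ lt_i]; apply/allP => j.
by rewrite mem_iota => /andP[_ lt_j]; apply: core_mu.
Qed.

Section BarCore.

Variables (l : seq nat) (t : nat).
Hypothesis bar_l : is_bar_partition l.

Lemma hook_double_distinct_witness i : i < size l -> t <= nth 0 l i ->
  nth 0 l i - t \notin l ->
  exists2 j, j < dd_row l i & hook (double_distinct l) i j = t.
Proof.
move=> lt_il le_ti; set m := nth 0 l i - t => m_notin.
(* The cell is (i, m + k) with k the number of parts larger than m: column m + k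
   has k cells, so its hook in row i is l_i - m = t. *)
set k := count (fun s => m < nth 0 l s) (iota 0 (size l)).
have gt_mP s : s < size l -> (m < nth 0 l s) = (s < k).
  apply: downclosed_count_iota => u v le_uv lt_vl /=.
  by have := bar_nth_gap bar_l le_uv lt_vl; lia.
have neq_m s : s < size l -> nth 0 l s != m.
  by move=> lt_sl; apply: contraNneq m_notin => <-; apply: mem_nth.
have le_kl : k <= size l by apply: count_iota_le.
have lt_m s : s < size l -> k <= s -> nth 0 l s < m.
  by move=> lt_sl; have := neq_m s lt_sl; rewrite leqNgt -gt_mP //; lia.
have lt_ik : i < k by rewrite -gt_mP //; have := neq_m i lt_il; lia.
have k_m : shifted_col l (m + k) = k.
  apply: eq_in_count => s; rewrite mem_iota add0n => /andP[_ lt_sl] /=.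
  have [lt_sk|le_ks] := ltnP s k.
    have lt_mk : m < nth 0 l k.-1 by rewrite gt_mP; lia.
    by have := @bar_nth_gap _ bar_l s k.-1 ltac:(lia) ltac:(lia); lia.
  have := lt_m k ltac:(lia) (leqnn k); have := bar_nth_gap bar_l le_ks lt_sl.
  lia.
have le_lmk : size l <= m + k.
  have [lt_kl|] := ltnP k (size l); last by lia.
  by have := lt_m k lt_kl (leqnn k); have := bar_nth_ge bar_l lt_kl; lia.
have le_mki : m + k <= nth 0 l i + i by rewrite (shifted_colP bar_l) // k_m.
exists (m + k); first by rewrite dd_row_small //; lia.
by have := hook_double_distinct_arm bar_l lt_il le_lmk le_mki; rewrite k_m; lia.
Qed.

Lemma bar_core_double_distinct : is_core t (double_distinct l) -> bar_core t l.
Proof.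
move=> /is_coreP core_dd; apply/allP => _ /(nthP 0) [i lt_il <-].
have lt_ih : i < dd_height l by apply: leq_trans lt_il (leq_maxl _ _).
have no_cell j : j < dd_row l i -> hook (double_distinct l) i j != t.
  move=> lt_j; apply: core_dd; first by rewrite size_double_distinct.
  by rewrite nth_double_distinct.
have sub_mem : t <= nth 0 l i -> nth 0 l i - t \in l.
  move=> le_ti; apply/negPn/negP => /(hook_double_distinct_witness lt_il le_ti).
  by case=> j /no_cell/eqP.
apply/and3P; split.
- apply/eqP => def_t; move: (sub_mem ltac:(by rewrite def_t)).
  rewrite def_t subnn => /(nthP 0) [s lt_sl def_s].
  by have := bar_nth_gt0 bar_l lt_sl; rewrite def_s.
- by apply/implyP => /ltnW.
- apply/implyP => lt_it; apply/negP => /(nthP 0) [j lt_jl def_j].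
  (* [nthP] states the bound at the eqType sort of nat; restate it for [lia]. *)
  have {}lt_jl : j < size l := lt_jl.
  have lt_j : j < dd_row l i by rewrite dd_row_small //; have := bar_nth_ge bar_l lt_il; lia.
  move: (no_cell j lt_j); rewrite hook_double_distinct_small // def_j.
  by rewrite subnKC ?eqxx // ltnW.
Qed.

Lemma double_distinct_bar_core : bar_core t l -> is_core t (double_distinct l).
Proof.
move=> core_l; have no_gap s y : s < size l -> y \notin l -> nth 0 l s != t + y.
  move=> lt_sl; apply: contraNneq => def_s.
  by rewrite -(addKn t y) -def_s bar_core_subn ?mem_nth // def_s leq_addr.
apply/is_coreP => i j; rewrite size_double_distinct // => lt_ih.
rewrite nth_double_distinct // => lt_j; apply/eqP => hook_t.
have [lt_il|le_li] := ltnP i (size l); last first.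
  move: lt_j; rewrite dd_row_large // => lt_jk.
  have lt_jl := leq_trans lt_jk (shifted_col_le_size l _).
  have le_ki : shifted_col l i.+1 <= i.+1 by have := shifted_col_le_size l i.+1; lia.
  have := no_gap j _ lt_jl (shifted_col_notin bar_l le_ki).
  by have := hook_double_distinct_leg bar_l le_li lt_ih lt_jk; rewrite hook_t; lia.
move: lt_j; rewrite dd_row_small // => lt_j.
have [lt_jl|le_lj] := ltnP j (size l).
  move: hook_t; rewrite hook_double_distinct_small // => sum_t.
  move/allP: core_l => /(_ _ (mem_nth 0 lt_il)) /and3P[_ _ /implyP core_i].
  have lt_it : nth 0 l i < t by rewrite -sum_t -{1}[nth 0 l i]addn0 ltn_add2l bar_nth_gt0.
  by move: (core_i lt_it); rewrite -sum_t addKn mem_nth.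
have le_kj : shifted_col l j <= j by have := shifted_col_le_size l j; lia.
have := no_gap i _ lt_il (shifted_col_notin bar_l le_kj).
by have := hook_double_distinct_arm bar_l lt_il le_lj ltac:(lia); rewrite hook_t; lia.
Qed.

Lemma is_core_double_distinct : is_core t (double_distinct l) = bar_core t l.
Proof. by apply/idP/idP => [/bar_core_double_distinct | /double_distinct_bar_core]. Qed.

End BarCore.

Lemma bar_core_perm t s1 s2 : perm_eq s1 s2 -> bar_core t s1 = bar_core t s2.
Proof.
by move=> eq_s; rewrite /bar_core (perm_all _ eq_s); apply: eq_all => x; rewrite !(perm_mem eq_s).
Qed.

Lemma bar_core_subn_mul t s x k : bar_core t s -> x \in s -> t * k <= x -> x - t * k \in s.
Proof.
move=> core_s s_x; elim: k => [|k IH]; first by rewrite muln0 subn0.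
rewrite mulnS addnC => le_tkx; rewrite subnDA.
by apply: bar_core_subn (IH _) _ => //; lia.
Qed.

Lemma bar_core_notin_half t s : bar_core t.*2 s -> t \notin s.
Proof.
move=> /allP core_s; apply/negP => /[dup] s_t /core_s /and3P[neq_t _ /implyP half].
have t_gt0 : 0 < t by move: neq_t; rewrite -addnn; lia.
by move: (half ltac:(lia)); rewrite -addnn addnK s_t.
Qed.

(** * Six-bar cores as unions of chains *)

Definition chain r a := [seq 6 * k + r | k <- iota 0 a].

Lemma mem_chain r a x : r < 6 -> (x \in chain r a) = (x %% 6 == r) && (x %/ 6 < a).
Proof.
move=> lt_r6; apply/mapP/andP => [[k] | [/eqP mod_x lt_xa]].
  by rewrite mem_iota => /andP[_ lt_ka] ->; split; lia.
by exists (x %/ 6); rewrite ?mem_iota //; rewrite {1}(divn_eq x 6) mod_x mulnC.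
Qed.

Lemma uniq_chain r a : uniq (chain r a).
Proof.
by rewrite map_inj_uniq ?iota_uniq // => k1 k2 /addIn /eqP; rewrite eqn_pmul2l // => /eqP.
Qed.

Lemma sumn_chain r a : sumn (chain r a) = 3 * (a * a.-1) + r * a.
Proof.
elim: a => [|a IH]; first by rewrite muln0.
rewrite /chain -[a.+1]addn1 iotaD map_cat sumn_cat -/(chain r a) IH /= addn0.
by case: a {IH}; nia.
Qed.

Definition chains6 a b c d := chain 1 a ++ chain 5 b ++ chain 2 c ++ chain 4 d.

Lemma mem_chains6 a b c d x : (x \in chains6 a b c d) =
  [|| (x %% 6 == 1) && (x %/ 6 < a), (x %% 6 == 5) && (x %/ 6 < b),
      (x %% 6 == 2) && (x %/ 6 < c) | (x %% 6 == 4) && (x %/ 6 < d)].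
Proof. by rewrite !mem_cat !mem_chain. Qed.

Lemma uniq_chains6 a b c d : uniq (chains6 a b c d).
Proof.
have disj r1 r2 a1 a2 : r1 < 6 -> r2 < 6 -> r1 != r2 ->
    has (mem (chain r1 a1)) (chain r2 a2) = false.
  move=> lt_r1 lt_r2 neq_r; apply/negbTE/hasPn => x.
  by rewrite /= !mem_chain // => /andP[/eqP-> _]; rewrite eq_sym (negbTE neq_r).
by rewrite /chains6 !cat_uniq !has_cat !uniq_chain !disj.
Qed.

Lemma chains6_bar_core a b c d : a * b = 0 -> c * d = 0 -> bar_core 6 (chains6 a b c d).
Proof.
move=> /eqP; rewrite muln_eq0 => ab0 /eqP; rewrite muln_eq0 => cd0.
apply/allP => x; rewrite !mem_chains6.
by case/orP: ab0 => /eqP->; case/orP: cd0 => /eqP->; lia.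
Qed.

(* Encodes the chains of lengths a and b in the residues 3 - r and 3 + r, one of
   which is empty. *)
Definition chain_code (r a b : nat) : int :=
  if 0 < a then ((6 * a)%:Z - r%:Z)%R else (- (6 * b + r)%:Z)%R.

Lemma sqr_chain_code r a b : r <= 3 -> a * b = 0 ->
  (chain_code r a b ^+ 2 = (12 * (sumn (chain (3 - r) a) + sumn (chain (3 + r) b)) + r ^ 2)%:Z)%R.
Proof.
move=> le_r3 /eqP; rewrite muln_eq0 /chain_code !sumn_chain.
by case: (posnP a) => [-> _|a_gt0 /orP[/eqP a0|/eqP->]]; rewrite ?expr2 /=; try lia; nia.
Qed.

Lemma chain_code_mod r a b : 0 < r < 6 -> (chain_code r a b %% 6)%Z = Posz (6 - r).
Proof. by rewrite /chain_code; case: (0 < a); lia. Qed.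

Lemma chain_code_inj r a b a' b' : 0 < r < 6 -> a * b = 0 -> a' * b' = 0 ->
  chain_code r a b = chain_code r a' b' -> a = a' /\ b = b'.
Proof. by rewrite /chain_code; case: (posnP a) => ?; case: (posnP a') => ? /=; nia. Qed.

Lemma chain_code_surj r x : 0 < r < 6 -> (x %% 6)%Z = Posz (6 - r) ->
  exists a b, a * b = 0 /\ chain_code r a b = x.
Proof.
move=> lt_r6 mod_x; have [q def_x] : exists q, x = (6 * q + (6 - r)%:Z)%R.
  by exists (x %/ 6)%Z; lia.
have [q_ge0|q_lt0] := lerP 0 q.
  by exists (absz q).+1, 0; rewrite muln0 /chain_code /=; lia.
by exists 0, (absz (q + 1)%R); rewrite /chain_code /=; lia.
Qed.

Lemma chains6_code a b c d : a * b = 0 -> c * d = 0 ->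
  (chain_code 2 a b ^+ 2 + chain_code 1 c d ^+ 2 = (12 * sumn (chains6 a b c d) + 5)%:Z)%R.
Proof.
move=> ab0 cd0; rewrite (@sqr_chain_code 2 a b isT ab0) (@sqr_chain_code 1 c d isT cd0).
by rewrite /chains6 !sumn_cat !subSS !subn0 !addSn !add0n; lia.
Qed.

Definition chain_len n (s : seq nat) r := count (fun k => 6 * k + r \in s) (iota 0 n.+1).

Section BarCore6.

Variables (n : nat) (s : seq nat).
Hypothesis core_s : bar_core 6 s.
Hypothesis s_le : forall x : nat, x \in s -> x <= n.

Lemma chain_lenP r k : (6 * k + r \in s) = (k < chain_len n s r).
Proof.
have [le_kn|lt_nk] := leqP k n.
  apply: (downclosed_count_iota (P := fun k => 6 * k + r \in s)); last by rewrite ltnS.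
  move=> u v le_uv _ /(bar_core_subn_mul (k := v - u) core_s).
  by rewrite (_ : 6 * v + r - 6 * (v - u) = 6 * u + r); [apply; lia | lia].
rewrite ltnNge (leq_trans (count_iota_le _ _) lt_nk).
by apply/negbTE/negP => /s_le; lia.
Qed.

Lemma chain_len_compl r : r < 6 -> chain_len n s r * chain_len n s (6 - r) = 0.
Proof.
move=> lt_r6; apply/eqP; rewrite muln_eq0 !eqn0Ngt -negb_and.
apply/negP => /andP[]; rewrite -(chain_lenP _ 0) -(chain_lenP _ 0) !muln0 !add0n => s_r s_6r.
by move/allP: core_s => /(_ r s_r) /and3P[_ _]; rewrite lt_r6 s_6r.
Qed.

Lemma chain_len0 : 0 \notin s -> chain_len n s 0 = 0.
Proof. by move=> s_pos; apply/eqP; rewrite -leqn0 leqNgt -(chain_lenP _ 0). Qed.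

Lemma chain_len3 : chain_len n s 3 = 0.
Proof. by move/eqP: (chain_len_compl (r := 3) isT); rewrite muln_eq0 orbb => /eqP. Qed.

Lemma bar_core6_chains : 0 \notin s -> s =i chains6 (chain_len n s 1) (chain_len n s 5)
                                      (chain_len n s 2) (chain_len n s 4).
Proof.
move=> s_pos x; rewrite mem_chains6 {1}(divn_eq x 6) mulnC chain_lenP.
have : x %% 6 < 6 by apply: ltn_pmod.
by case: (x %% 6) => [|[|[|[|[|[|r]]]]]] //= _; rewrite ?chain_len0 ?chain_len3 ?orbF.
Qed.

End BarCore6.

Lemma chains6_inj a b c d a' b' c' d' : chains6 a b c d =i chains6 a' b' c' d' ->
  [/\ a = a', b = b', c = c' & d = d'].
Proof.
have ltn_inj e e' : (forall k, (k < e) = (k < e')) -> e = e'.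
  by move=> eq_e; have := eq_e e; have := eq_e e'; rewrite !ltnn; lia.
move=> eq_ch; split; apply: ltn_inj => k.
- by move: (eq_ch (6 * k + 1)); rewrite !mem_chains6; lia.
- by move: (eq_ch (6 * k + 5)); rewrite !mem_chains6; lia.
- by move: (eq_ch (6 * k + 2)); rewrite !mem_chains6; lia.
- by move: (eq_ch (6 * k + 4)); rewrite !mem_chains6; lia.
Qed.

(** * Counting *)

Definition parts N (A : {set 'I_N.+1}) : seq nat := [seq val i | i <- enum A].

Lemma uniq_parts N (A : {set 'I_N.+1}) : uniq (parts A).
Proof. by rewrite map_inj_uniq ?enum_uniq //; apply: val_inj. Qed.

Lemma mem_parts N (A : {set 'I_N.+1}) v : (v \in parts A) = (v < N.+1) && (inord v \in A).
Proof.
apply/mapP/andP => [[i] | [lt_vN A_v]].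
  by rewrite mem_enum => A_i ->; split; rewrite ?ltn_ord ?inord_val.
by exists (inord v); rewrite ?mem_enum //= inordK.
Qed.

Lemma parts_le N (A : {set 'I_N.+1}) v : v \in parts A -> v <= N.
Proof. by rewrite mem_parts => /andP[]. Qed.

Lemma inD6E N (A : {set 'I_N.+1}) :
  (A \in D6 N) = [&& 0 \notin parts A, sumn (parts A) == N & bar_core 6 (parts A)].
Proof.
rewrite inE /inD6 /bar_of -/(parts A).
have perm_A : perm_eq (sort geq (parts A)) (parts A) by rewrite perm_sort.
have bar_A : is_bar_partition (sort geq (parts A)) = (0 \notin parts A).
  rewrite /is_bar_partition gtn_sorted_uniq_geq sort_uniq uniq_parts.
  rewrite sort_sorted /=; last by move=> x y; apply: leq_total.
  by rewrite (perm_all _ perm_A); elim: (parts A) => //= x s ->; rewrite inE negb_or; case: x.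
rewrite bar_A (perm_sumn perm_A) mem_sort; case A_0: (0 \in parts A) => //=.
rewrite is_core_double_distinct ?bar_A ?A_0 // (bar_core_perm 6 perm_A).
by case core_A: (bar_core 6 _); rewrite ?andbF // (bar_core_notin_half (t := 3) core_A).
Qed.

Definition code_of N (A : {set 'I_N.+1}) : int * int :=
  let len := chain_len N (parts A) in
  (chain_code 2 (len 1) (len 5), chain_code 1 (len 2) (len 4)).

Lemma D6_chains N (A : {set 'I_N.+1}) : A \in D6 N ->
  let len := chain_len N (parts A) in
  [/\ parts A =i chains6 (len 1) (len 5) (len 2) (len 4),
      len 1 * len 5 = 0, len 2 * len 4 = 0 & sumn (parts A) = N].
Proof.
rewrite inD6E => /and3P[A_pos /eqP sum_A core_A].
have le_A := @parts_le N A.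
split=> //.
- exact: bar_core6_chains.
- exact: (chain_len_compl core_A le_A (r := 1)).
- exact: (chain_len_compl core_A le_A (r := 2)).
Qed.

Definition int_pairs n := [seq (x, y) | x <- int_range n, y <- int_range n].

Definition is_code n (p : int * int) :=
  [&& (p.1 ^+ 2 + p.2 ^+ 2 == Posz n)%R, (p.1 %% 6)%Z == 4 & (p.2 %% 6)%Z == 5].

Lemma mem_int_range M (x : int) : (x \in int_range M) = (- Posz M <= x <= Posz M)%R.
Proof.
rewrite /int_range; apply/mapP/idP => [[i] | bnd_x]; first by rewrite mem_iota => ? ->; lia.
by exists (absz (x + Posz M)%R); rewrite ?mem_iota; lia.
Qed.

Lemma mem_int_range_opp M (x : int) : ((- x)%R \in int_range M) = (x \in int_range M).
Proof. by rewrite !mem_int_range; lia. Qed.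

Lemma uniq_int_pairs n : uniq (int_pairs n).
Proof.
have uniq_range : uniq (int_range n) by rewrite map_inj_uniq ?iota_uniq // => i j; lia.
by rewrite allpairs_uniq // => -[? ?] [? ?] _ _ [-> ->].
Qed.

Lemma mem_int_pairs n (x y : int) :
  ((x, y) \in int_pairs n) = (x \in int_range n) && (y \in int_range n).
Proof. by apply/allpairsP/andP => [[[a b] [? ? [-> ->]]] | [? ?]] //; exists (x, y). Qed.

Lemma sqr_sum_mem_int_pairs n (x y : int) : (x ^+ 2 + y ^+ 2 = Posz n)%R ->
  (x, y) \in int_pairs n.
Proof. by rewrite mem_int_pairs !mem_int_range !expr2 => ?; apply/andP; split; nia. Qed.

Lemma code_of_D6 N (A : {set 'I_N.+1}) : A \in D6 N ->
  code_of A \in [seq p <- int_pairs (12 * N + 5) | is_code (12 * N + 5) p].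
Proof.
move=> /D6_chains [eq_A l15 l24 sum_A]; rewrite /code_of.
have sqr_A := chains6_code l15 l24.
rewrite -(perm_sumn (uniq_perm (uniq_parts A) (uniq_chains6 _ _ _ _) eq_A)) sum_A in sqr_A.
by rewrite mem_filter /is_code /= sqr_A !chain_code_mod ?eqxx ?sqr_sum_mem_int_pairs.
Qed.

Lemma code_of_inj N : {in D6 N &, injective (@code_of N)}.
Proof.
move=> A B /D6_chains [eq_A a15 a24 _] /D6_chains [eq_B b15 b24 _] [].
move=> /(chain_code_inj _ a15 b15) [//| e1 e5] /(chain_code_inj _ a24 b24) [//| e2 e4].
apply/setP => i; have := eq_A (val i); have := eq_B (val i).
by rewrite e1 e5 e2 e4 => <-; rewrite !mem_parts ltn_ord /= inord_val.
Qed.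

Lemma code_of_surj N p : p \in [seq p <- int_pairs (12 * N + 5) | is_code (12 * N + 5) p] ->
  exists2 A, A \in D6 N & code_of A = p.
Proof.
case: p => x y; rewrite mem_filter /is_code /= => /andP[/and3P[/eqP sqr_xy /eqP x_4 /eqP y_5] _].
have [a [b [ab0 def_x]]] := chain_code_surj (r := 2) isT x_4.
have [c [d [cd0 def_y]]] := chain_code_surj (r := 1) isT y_5.
have sum_abcd : sumn (chains6 a b c d) = N.
  by have := chains6_code ab0 cd0; rewrite def_x def_y sqr_xy; lia.
pose A := [set i : 'I_N.+1 | val i \in chains6 a b c d].
have eq_A : parts A =i chains6 a b c d.
  move=> v; rewrite mem_parts inE; case: (ltnP v N.+1) => [lt_vN | le_Nv] /=.
    by rewrite inordK.
  by apply/esym/negP => /leq_sumn_mem; rewrite sum_abcd; lia.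
have perm_A := uniq_perm (uniq_parts A) (uniq_chains6 _ _ _ _) eq_A.
have D6_A : A \in D6 N.
  rewrite inD6E (perm_sumn perm_A) sum_abcd eqxx (bar_core_perm 6 perm_A) eq_A.
  by rewrite mem_chains6 chains6_bar_core.
exists A => //; have [eq_len _ _ _] := D6_chains D6_A; rewrite /code_of /=.
have [-> -> -> ->] := chains6_inj (fun v => etrans (esym (eq_len v)) (eq_A v)).
by rewrite def_x def_y.
Qed.

Lemma card_D6 N : #|D6 N| = count (is_code (12 * N + 5)) (int_pairs (12 * N + 5)).
Proof.
rewrite cardE -(size_map (@code_of N)) -size_filter; apply/perm_size/uniq_perm.
- by rewrite map_inj_in_uniq ?enum_uniq // => A B; rewrite !mem_enum; apply: code_of_inj.
- by rewrite filter_uniq ?uniq_int_pairs.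
move=> p; apply/mapP/idP => [[A] | /code_of_surj [A D6_A <-]].
  by rewrite mem_enum => /code_of_D6 + ->.
by exists A; rewrite ?mem_enum.
Qed.

Lemma count_involution (T : eqType) (f : T -> T) (s : seq T) (a b : pred T) :
  involutive f -> uniq s -> (forall p, (f p \in s) = (p \in s)) ->
  (forall p, a (f p) = a p) -> (forall p, a p -> b (f p) = ~~ b p) ->
  count a s = 2 * count (predI a b) s.
Proof.
move=> fK uniq_s mem_f a_f b_f.
have perm_f : perm_eq (map f s) s.
  apply: uniq_perm => //; first by rewrite map_inj_uniq //; apply: inv_inj.
  move=> p; apply/mapP/idP => [[q s_q ->] | s_p]; first by rewrite mem_f.
  by exists (f p); rewrite ?fK ?mem_f.
rewrite -size_filter -(count_predC b) !count_filter mul2n -addnn.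
have -> : count (predI b a) s = count (predI a b) s by apply: eq_count => p; apply: andbC.
congr (_ + _); rewrite -(permP perm_f) count_map; apply: eq_count => p /=.
by rewrite a_f; case a_p: (a p); rewrite ?andbF // (b_f _ a_p) negbK andbT.
Qed.

Definition pm1_mod6 (z : int) := ((z %% 6)%Z == 1) || ((z %% 6)%Z == 5).
Definition pm2_mod6 (z : int) := ((z %% 6)%Z == 2) || ((z %% 6)%Z == 4).

Lemma pm1_mod6_pm2 (z : int) : pm1_mod6 z -> pm2_mod6 z = false.
Proof. by rewrite /pm1_mod6 /pm2_mod6; lia. Qed.

Lemma sqr_sum_mod6 N (x y : int) : (x ^+ 2 + y ^+ 2 = Posz (12 * N + 5))%R ->
  pm2_mod6 x && pm1_mod6 y || pm1_mod6 x && pm2_mod6 y.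
Proof.
rewrite /pm1_mod6 /pm2_mod6 {1}(intdiv.divz_eq x 6) {1}(intdiv.divz_eq y 6).
have : (0 <= (x %% 6)%Z < 6)%R by lia.
have : (0 <= (y %% 6)%Z < 6)%R by lia.
move: (x %/ 6)%Z (x %% 6)%Z (y %/ 6)%Z (y %% 6)%Z => q u w v.
have cases6 (z : int) : (0 <= z < 6)%R -> z = 0 \/ z = 1 \/ z = 2 \/ z = 3 \/ z = 4 \/ z = 5 by lia.
by case/cases6 => [|[|[|[|[|]]]]] ->; case/cases6 => [|[|[|[|[|]]]]] ->;
  rewrite /= ?expr2 => // sqr_qw; nia.
Qed.

Lemma r2_code N :
  r2 (12 * N + 5) = 8 * count (is_code (12 * N + 5)) (int_pairs (12 * N + 5)).
Proof.
set n := 12 * N + 5; set L := int_pairs n.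
have uniq_L : uniq L := uniq_int_pairs n.
pose sqr_n (p : int * int) := (p.1 ^+ 2 + p.2 ^+ 2 == Posz n)%R.
have sqr_mod6 p : sqr_n p -> pm2_mod6 p.1 && pm1_mod6 p.2 || pm1_mod6 p.1 && pm2_mod6 p.2.
  by case: p => x y /eqP; apply: sqr_sum_mod6.
rewrite (_ : r2 n = count sqr_n L) //.
rewrite (@count_involution _ (fun p => (p.2, p.1)) L _ (fun p => pm2_mod6 p.1)) //; first last.
- case=> x y /sqr_mod6 /orP[] /andP[x_m y_m] /=.
    by rewrite x_m (pm1_mod6_pm2 y_m).
  by rewrite y_m (pm1_mod6_pm2 x_m).
- by case=> x y; rewrite /sqr_n /= addrC.
- by case=> x y; rewrite !mem_int_pairs andbC.
- by case.
rewrite (@count_involution _ (fun p => ((- p.1)%R, p.2)) L _ (fun p => (p.1 %% 6)%Z == 4)) //;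
  first last.
- by case=> x y /andP[_]; rewrite /pm2_mod6 /=; lia.
- by case=> x y; rewrite /= /sqr_n /pm2_mod6 /= sqrrN; congr andb; lia.
- by case=> x y; rewrite !mem_int_pairs mem_int_range_opp.
- by case=> x y; rewrite /= opprK.
rewrite (@count_involution _ (fun p => (p.1, (- p.2)%R)) L _ (fun p => (p.2 %% 6)%Z == 5)) //;
  first last.
- case=> x y /andP[/andP[/sqr_mod6 /= + x2] _].
  have -> : pm1_mod6 x = false by apply: contraTF x2 => /pm1_mod6_pm2->.
  by rewrite x2 /= orbF /pm1_mod6; lia.
- by case=> x y; rewrite /= /sqr_n sqrrN.
- by case=> x y; rewrite !mem_int_pairs mem_int_range_opp.
- by case=> x y; rewrite /= opprK.
rewrite !mulnA; congr (_ * _); apply: eq_count => -[x y]; rewrite /is_code /sqr_n /pm2_mod6 /=.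
by case: (_ == _) => //=; lia.
Qed.

Theorem corollary8p18 (N : nat) :
  ((#|D6 N|)%:R = 8^-1 * (r2 (12 * N + 5))%:R :> rat)%R.
Proof. by rewrite card_D6 r2_code natrM mulrA mulVf ?mul1r. Qed.
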